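(* Let $\alpha,\beta,\gamma\in\mathbb R$ with $\gamma>0$ and $\alpha\beta>0$. Then $z\mapsto F(\alpha,\beta;\gamma;z)-1$ is strictly increasing on $[0,1)$.
   Context: $F(\alpha,\beta;\gamma;z)=\sum_{n=0}^{\infty}\frac{(\alpha)_n(\beta)_n}{(\gamma)_n\,n!}z^n$ for $|z|<1$ is the Gauss hypergeometric function, where $(x)_n=x(x+1)\cdots(x+n-1)$ and $(x)_0=1$ (defined for $\gamma\notin\mathbb Z_{\le0}$). *)

From mathcomp Require Import all_boot all_order all_algebra.
From mathcomp Require Import all_classical all_reals topology normedtype sequences.
Set Implicit Arguments. Unset Strict Implicit. Unset Printing Implicit Defensive.
Import Order.TTheory GRing.Theory Num.Theory numFieldNormedType.Exports.
Local Open Scope ring_scope.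

Definition pochhammer {R : pzRingType} (x : R) (n : nat) : R :=
  \prod_(i < n) (x + i%:R).

Definition hyp_term {R : fieldType} (a b c z : R) (n : nat) : R :=
  pochhammer a n * pochhammer b n / (pochhammer c n * n`!%:R) * z ^+ n.

(* F(a,b;c;z) = sum_{n>=0} hyp_term n, defined as the limit of partial sums
   (the series converges for |z| < 1 when c is not a nonpositive integer). *)
Definition hyp2F1 {R : realType} (a b c z : R) : R :=
  limn (series (hyp_term a b c z)).

(* The series F(a,b;c;z) may be differentiated termwise on (-1,1), and
   F'(a,b;c;z) = (ab/c) F(a+1,b+1;c+1;z); since ab/c > 0 it suffices that
   F(a+1,b+1;c+1;z) > 0 on [0,1).  When a, b > 0 all terms are positive.
   When a, b < 0 the parameters a+1, b+1 lie below c+1 > 1, and Gauss'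
   contiguous relation
     F(a,b;c;z) = (1-z) F(a+1,b;c;z) + ((c-b)/c) z F(a+1,b;c+1;z)
   expresses F with a negative upper parameter as a nonnegative combination
   of values with that parameter raised by one, preserving the hypotheses;
   finitely many raisings reach nonnegative upper parameters. *)

From mathcomp Require Import all_boot all_order all_algebra.
From mathcomp Require Import all_classical all_reals topology normedtype sequences.
From mathcomp Require Import derive exp realfun.
From mathcomp Require Import ring lra.
Import Order.TTheory GRing.Theory Num.Theory numFieldNormedType.Exports.
Local Open Scope classical_set_scope.
Local Open Scope ring_scope.

Section series_facts.
Variable R : realType.
Implicit Types u : R^nat.

Lemma is_cvg_series_ratio u (r : R) : 0 < r -> r < 1 ->
  (\forall n \near \oo, `|u n.+1| <= r * `|u n|) -> cvgn (series u).
Proof.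
move=> r0 r1 [N _ ratio_le].
have rX0 n : 0 <= r ^+ n by rewrite exprn_ge0 // ltW.
pose K := \sum_(i < N.+1) `|u i| / r ^+ i.
have K0 : 0 <= K by apply: sumr_ge0 => i _; rewrite divr_ge0.
have le_init n : (n <= N)%N -> `|u n| <= K * r ^+ n.
  move=> nN; rewrite -ler_pdivrMr ?exprn_gt0 //.
  rewrite /K (bigD1 (Ordinal (nN : (n < N.+1)%N))) //= lerDl.
  by apply: sumr_ge0 => i _; rewrite divr_ge0.
have le_geometric n : `|u n| <= K * r ^+ n.
  elim: n => [|n IH]; first exact: le_init.
  have [nN|Nn] := leqP n.+1 N; first exact: le_init.
  apply: le_trans (ratio_le n Nn) _.
  by rewrite exprS mulrCA ler_wpM2l // ltW.
apply: normed_cvg; apply: (@series_le_cvg _ _ (geometric K r)) => //= n.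
  by rewrite mulr_ge0.
by apply: is_cvg_geometric_series; rewrite gtr0_norm.
Qed.

Lemma lim_series_shiftS u : cvgn (series (fun n => u n.+1)) ->
  limn (series u) = u 0%N + limn (series (fun n => u n.+1)).
Proof.
move=> cvg_shift.
have seriesS n : series u n.+1 = u 0%N + series (fun n => u n.+1) n.
  by rewrite /series /= big_nat_recl.
have cvg_u : series u @ \oo --> u 0%N + limn (series (fun n => u n.+1)).
  rewrite -cvg_shiftS; under eq_fun do rewrite seriesS.
  exact: cvgD (cvg_cst _) cvg_shift.
exact: cvg_lim.
Qed.

Lemma eventually_mul_sqrDn_le (g e r : R) : 0 <= e -> e < r ->
  \forall n \near \oo, e * (g + n%:R) ^+ 2 <= r * n%:R ^+ 2.
Proof.
move=> e0 er.
pose D := 2 * `|g| + g ^+ 2.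
have D0 : 0 <= D by rewrite /D; have := normr_ge0 g; nra.
have x0 : 0 <= e * D / (r - e) by apply: divr_ge0; [exact: mulr_ge0 | lra].
exists (Num.bound (e * D / (r - e))).+1 => // n /= Nn.
have nN : e * D / (r - e) < n%:R.
  by apply: lt_trans (archi_boundP x0) _; rewrite ltr_nat.
have n1 : 1 <= n%:R :> R by rewrite ler1n; apply: leq_trans Nn.
have eDn : e * D <= (r - e) * n%:R.
  by rewrite [_ * n%:R]mulrC -ler_pdivrMr ?subr_gt0 //; exact: ltW.
have gn : g * n%:R <= `|g| * n%:R by rewrite ler_wpM2r ?ler_norm.
have gg : g ^+ 2 <= g ^+ 2 * n%:R by rewrite ler_peMr // sqr_ge0.
rewrite /D in eDn; nra.
Qed.

Lemma pseriesZ (k : R) (f : R^nat) x : pseries (k *: f) x = k *: pseries f x.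
Proof.
rewrite /pseries -seriesZ; congr series.
by apply/funext => n; rewrite !fctE /= scalerAl.
Qed.

Lemma pseries_diffsZ (k : R) (f : R^nat) :
  pseries_diffs (k *: f) = k *: pseries_diffs f.
Proof. by apply/funext => n; rewrite /pseries_diffs /= mulrCA. Qed.

End series_facts.

Lemma pochhammer0 {R : pzRingType} (x : R) : pochhammer x 0 = 1.
Proof. by rewrite /pochhammer big_ord0. Qed.

Lemma pochhammerS {R : pzRingType} (x : R) n :
  pochhammer x n.+1 = pochhammer x n * (x + n%:R).
Proof. by rewrite /pochhammer big_ord_recr. Qed.

Lemma pochhammerSl {R : pzRingType} (x : R) n :
  pochhammer x n.+1 = x * pochhammer (x + 1) n.
Proof.
rewrite /pochhammer big_ord_recl addr0; congr (_ * _).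
by apply: eq_bigr => i _; rewrite lift0 -natr1 addrA addrAC.
Qed.

Lemma pochhammer_gt0 {R : numDomainType} (x : R) n : 0 < x -> 0 < pochhammer x n.
Proof. by move=> x0; apply: prodr_gt0 => i _; exact: ltr_wpDr. Qed.

Lemma pochhammer_ge0 {R : numDomainType} (x : R) n : 0 <= x -> 0 <= pochhammer x n.
Proof. by move=> x0; apply: prodr_ge0 => i _; exact: addr_ge0. Qed.

Definition hyp_coef {R : fieldType} (a b c : R) (n : nat) : R :=
  pochhammer a n * pochhammer b n / (pochhammer c n * n`!%:R).

Section hypergeometric_terms.
Variable R : numFieldType.
Implicit Types a b c z : R.

Lemma hyp_term0 a b c z : hyp_term a b c z 0 = 1.
Proof. by rewrite /hyp_term !pochhammer0 fact0 expr0 !(mul1r, mulr1, invr1). Qed.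

Lemma hyp_termC a b c z : hyp_term a b c z = hyp_term b a c z.
Proof. by apply/funext => n; rewrite /hyp_term [pochhammer a n * _]mulrC. Qed.

Lemma hyp_term_ge0 a b c z n : 0 <= a -> 0 <= b -> 0 < c -> 0 <= z ->
  0 <= hyp_term a b c z n.
Proof.
move=> a0 b0 c0 z0; rewrite /hyp_term mulr_ge0 ?exprn_ge0 ?divr_ge0 //.
  by rewrite mulr_ge0 ?pochhammer_ge0.
by rewrite mulr_ge0 ?ler0n // ltW ?pochhammer_gt0.
Qed.

Section positive_c.
Variable c : R.
Hypothesis c_gt0 : 0 < c.

Let c_neq0 : c != 0. Proof. by rewrite gt_eqF. Qed.
Let cn_neq0 n : c + n%:R != 0. Proof. by rewrite gt_eqF // ltr_wpDr. Qed.
Let pochc_neq0 n : pochhammer c n != 0. Proof. by rewrite gt_eqF ?pochhammer_gt0. Qed.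
Let fact_neq0 n : n`!%:R != 0 :> R. Proof. by rewrite pnatr_eq0 -lt0n fact_gt0. Qed.
Let natS_neq0 n : 1 + n%:R != 0 :> R. Proof. by rewrite addrC natr1 pnatr_eq0. Qed.

Lemma hyp_termS a b z n : hyp_term a b c z n.+1 =
  hyp_term a b c z n * ((a + n%:R) * (b + n%:R) * z / ((c + n%:R) * n.+1%:R)).
Proof.
rewrite /hyp_term !pochhammerS factS natrM exprS.
by field; rewrite pochc_neq0 fact_neq0 cn_neq0 natS_neq0.
Qed.

Lemma hyp_term_contiguous a b z n :
  hyp_term a b c z n.+1 - hyp_term (a + 1) b c z n.+1 =
  z * ((c - b) / c * hyp_term (a + 1) b (c + 1) z n - hyp_term (a + 1) b c z n).
Proof.
have pochc1 : pochhammer (c + 1) n = pochhammer c n * (c + n%:R) / c.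
  by rewrite -pochhammerS pochhammerSl mulrAC mulfV ?mul1r.
rewrite /hyp_term pochhammerSl !pochhammerS pochc1 factS natrM exprS.
by field; rewrite pochc_neq0 fact_neq0 cn_neq0 natS_neq0 c_neq0.
Qed.

Lemma hyp_coef_derivS a b n :
  n.+1%:R * hyp_coef a b c n.+1 = a * b / c * hyp_coef (a + 1) (b + 1) (c + 1) n.
Proof.
have pochc1_neq0 : pochhammer (c + 1) n != 0.
  by rewrite gt_eqF ?pochhammer_gt0 ?addr_gt0.
rewrite /hyp_coef !pochhammerSl factS natrM.
by field; rewrite pochc1_neq0 fact_neq0 natS_neq0 c_neq0.
Qed.

End positive_c.
End hypergeometric_terms.

Section hypergeometric_function.
Variable R : realType.
Implicit Types a b c z : R.

Lemma hyp2F1E a b c : hyp2F1 a b c = fun z => limn (pseries (hyp_coef a b c) z).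
Proof. by []. Qed.

Lemma hyp2F1C a b c z : hyp2F1 a b c z = hyp2F1 b a c z.
Proof. by rewrite /hyp2F1 hyp_termC. Qed.

Lemma is_cvg_hyp_series a b c z : 0 < c -> `|z| < 1 ->
  cvgn (series (hyp_term a b c z)).
Proof.
move=> c0 z1; have z0 := normr_ge0 z.
pose r := (1 + `|z|) / 2.
have r0 : 0 < r by rewrite /r; lra.
have zr : `|z| < r by rewrite /r; lra.
apply: (@is_cvg_series_ratio _ _ r) => //; first by rewrite /r; lra.
near=> n.
have sqr_le : `|z| * (`|a| + `|b| + n%:R) ^+ 2 <= r * n%:R ^+ 2.
  by near: n; exact: eventually_mul_sqrDn_le.
rewrite hyp_termS // normrM mulrC ler_wpM2r //.
have cn0 : 0 < (c + n%:R) * n.+1%:R by rewrite mulr_gt0 ?ltr0n ?ltr_wpDr.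
rewrite normrM normfV (gtr0_norm cn0) ler_pdivrMr // !normrM.
have cn : n%:R ^+ 2 <= (c + n%:R) * n.+1%:R.
  by rewrite -natr1; have := ler0n R n; nra.
apply: le_trans (ler_wpM2l (ltW r0) cn); apply: le_trans sqr_le.
rewrite mulrC ler_wpM2l //.
have an : `|a + n%:R| <= `|a| + n%:R by rewrite (le_trans (ler_normD _ _)) ?normr_nat.
have bn : `|b + n%:R| <= `|b| + n%:R by rewrite (le_trans (ler_normD _ _)) ?normr_nat.
have := normr_ge0 a; have := normr_ge0 b; have := ler0n R n.
have := normr_ge0 (a + n%:R); have := normr_ge0 (b + n%:R); nra.
Unshelve. all: by end_near.
Qed.

Lemma hyp2F1_contiguous a b c z : 0 < c -> `|z| < 1 ->
  hyp2F1 a b c z =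
  (1 - z) * hyp2F1 (a + 1) b c z + (c - b) / c * z * hyp2F1 (a + 1) b (c + 1) z.
Proof.
move=> c0 z1.
have cvg0 := is_cvg_hyp_series a b c z c0 z1.
have cvg1 := is_cvg_hyp_series (a + 1) b c z c0 z1.
have cvg2 := is_cvg_hyp_series (a + 1) b (c + 1) z (addr_gt0 c0 ltr01) z1.
set h1 := hyp_term (a + 1) b c z; set h2 := hyp_term (a + 1) b (c + 1) z.
have cvg2' : cvgn (series ((c - b) / c *: h2)) by exact: is_cvg_seriesZ.
have cvg21 : cvgn (series ((c - b) / c *: h2 - h1)) by exact: is_cvg_seriesB.
pose d := hyp_term a b c z - h1.
have d0 : d 0%N = 0 by rewrite /d /h1 !fctE !hyp_term0 subrr.
have dS : (fun n => d n.+1) = z *: ((c - b) / c *: h2 - h1).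
  by apply/funext => n; rewrite /d !fctE /= hyp_term_contiguous.
have lim_d : limn (series d) =
    z * ((c - b) / c * hyp2F1 (a + 1) b (c + 1) z - hyp2F1 (a + 1) b c z).
  have cvg_dS : cvgn (series (fun n => d n.+1)) by rewrite dS; exact: is_cvg_seriesZ.
  rewrite (@lim_series_shiftS _ _ cvg_dS) d0 add0r dS.
  by rewrite lim_seriesZ // lim_seriesB // lim_seriesZ.
have := lim_seriesB cvg0 cvg1; rewrite -/d lim_d -!/(hyp2F1 _ _ _ _).
lra.
Qed.

Lemma hyp2F1_gt0_nonneg a b c z : 0 <= a -> 0 <= b -> 0 < c -> 0 <= z -> z < 1 ->
  0 < hyp2F1 a b c z.
Proof.
move=> a0 b0 c0 z0 z1.
have term_ge0 n : 0 <= hyp_term a b c z n by exact: hyp_term_ge0.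
have nd : nondecreasing_seq (series (hyp_term a b c z)).
  by apply/nondecreasing_seqP => n; rewrite seriesSr lerDl.
have cvgF : cvgn (series (hyp_term a b c z)).
  by apply: is_cvg_hyp_series; rewrite ?ger0_norm.
apply: lt_le_trans (nondecreasing_cvgn_le nd cvgF 1%N).
by rewrite /series /= big_nat1 hyp_term0 ltr01.
Qed.

Lemma hyp2F1_gt0_contiguous a b c z : 0 < c -> b <= c -> 0 <= z -> z < 1 ->
  0 < hyp2F1 (a + 1) b c z -> 0 < hyp2F1 (a + 1) b (c + 1) z -> 0 < hyp2F1 a b c z.
Proof.
move=> c0 bc z0 z1 F1 F2; rewrite hyp2F1_contiguous ?ger0_norm //.
have k0 : 0 <= (c - b) / c by rewrite divr_ge0 ?subr_ge0 //; exact: ltW.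
have p1 : 0 < (1 - z) * hyp2F1 (a + 1) b c z by rewrite mulr_gt0 ?subr_gt0.
have p2 : 0 <= (c - b) / c * z * hyp2F1 (a + 1) b (c + 1) z.
  by apply: mulr_ge0; [exact: mulr_ge0 | exact: ltW].
lra.
Qed.

(* m and k bound the number of unit raisings that make a and b nonnegative. *)
Lemma hyp2F1_gt0_raising (n m k : nat) a b c z : (m + k <= n)%N ->
  - m%:R <= a -> - k%:R <= b -> 1 <= c -> (a < 0 -> b <= c) -> (b < 0 -> a <= c) ->
  0 <= z -> z < 1 -> 0 < hyp2F1 a b c z.
Proof.
move=> + + + + + + z0 z1; elim: n m k a b c => [|n IH] m k a b c.
  rewrite leqn0 addn_eq0 => /andP[/eqP-> /eqP->]; rewrite oppr0 => a0 b0 c1 _ _.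
  by apply: hyp2F1_gt0_nonneg => //; lra.
move=> mkn am bk c1 ab ba.
have [a0|a0] := ltrP a 0.
  case: m mkn am => [|m] mkn am; first lra.
  rewrite -natr1 in am; have bc := ab a0.
  by apply: hyp2F1_gt0_contiguous; try lra; apply: (IH m k); try lra.
have [b0|b0] := ltrP b 0.
  case: k mkn bk => [|k] mkn bk; first lra.
  rewrite -natr1 in bk; rewrite addnS in mkn; have ac := ba b0.
  by rewrite hyp2F1C; apply: hyp2F1_gt0_contiguous; try lra;
    rewrite hyp2F1C; apply: (IH m k); try lra.
by apply: hyp2F1_gt0_nonneg => //; lra.
Qed.

Lemma hyp2F1_gt0 a b c z : 1 <= c -> (a < 0 -> b <= c) -> (b < 0 -> a <= c) ->
  0 <= z -> z < 1 -> 0 < hyp2F1 a b c z.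
Proof.
have nat_lb (x : R) : exists m : nat, - m%:R <= x.
  exists (Num.bound `|x|); have := archi_boundP (normr_ge0 x).
  by have := ler_norm (- x); rewrite normrN; lra.
have [m am] := nat_lb a; have [k bk] := nat_lb b.
exact: (hyp2F1_gt0_raising _ _ _ _ _ _ z (leqnn (m + k)) am bk).
Qed.

Lemma pseries_diffs_hyp_coef a b c : 0 < c ->
  pseries_diffs (hyp_coef a b c) = (a * b / c) *: hyp_coef (a + 1) (b + 1) (c + 1).
Proof. by move=> c0; apply/funext => n; rewrite /pseries_diffs hyp_coef_derivS. Qed.

Lemma is_derive_hyp2F1 a b c (t : R) : 0 < c -> `|t| < 1 ->
  is_derive t 1 (hyp2F1 a b c) (a * b / c * hyp2F1 (a + 1) (b + 1) (c + 1) t).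
Proof.
move=> c0 t1; have c1 : 0 < c + 1 by rewrite addr_gt0.
pose K := (1 + `|t|) / 2.
have t0 := normr_ge0 t.
have K1 : `|K| < 1 by rewrite ger0_norm /K; lra.
have tK : `|t| < `|K| by rewrite [`|K|]ger0_norm /K; lra.
have cvgK a' b' c' : 0 < c' -> cvgn (pseries (hyp_coef a' b' c') K).
  by move=> c'0; exact: is_cvg_hyp_series.
have cvg_diffs : cvgn (pseries (pseries_diffs (hyp_coef a b c)) K).
  by rewrite pseries_diffs_hyp_coef // pseriesZ; apply: is_cvgZl_tmp; exact: cvgK.
have cvg_diffs2 : cvgn (pseries (pseries_diffs (pseries_diffs (hyp_coef a b c))) K).
  rewrite pseries_diffs_hyp_coef // pseries_diffsZ pseries_diffs_hyp_coef // !pseriesZ.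
  by do 2 apply: is_cvgZl_tmp; apply: cvgK; rewrite addr_gt0.
rewrite hyp2F1E; have := pseries_snd_diffs (cvgK a b c c0) cvg_diffs cvg_diffs2 tK.
rewrite pseries_diffs_hyp_coef // pseriesZ limZl_tmp //.
exact: is_cvg_hyp_series.
Qed.

End hypergeometric_function.

Theorem corollary4p6 (R : realType) (a b c : R) (hc : 0 < c) (hab : 0 < a * b) :
  forall x y : R, 0 <= x -> x < y -> y < 1 ->
    hyp2F1 a b c x - 1 < hyp2F1 a b c y - 1.
Proof.
move=> x y x0 xy y1; rewrite ltrD2r.
have dF (t : R) : x <= t -> t <= y ->
    is_derive t 1 (hyp2F1 a b c) (a * b / c * hyp2F1 (a + 1) (b + 1) (c + 1) t).
  by move=> xt ty; apply: is_derive_hyp2F1; rewrite ?ger0_norm; lra.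
have dF_gt0 (t : R) : x <= t -> t <= y ->
    0 < a * b / c * hyp2F1 (a + 1) (b + 1) (c + 1) t.
  move=> xt ty; rewrite mulr_gt0 ?divr_gt0 // hyp2F1_gt0 //; try lra.
  - move=> a1; have b0 : b < 0 by nra.
    lra.
  - move=> b1; have a0 : a < 0 by nra.
    lra.
apply: (@gtr0_derive1_incr _ _ x y) => //.
- move=> t; rewrite in_itv /= => /andP[xt ty].
  by have [] := dF t (ltW xt) (ltW ty).
- move=> t; rewrite in_itv /= => /andP[xt ty].
  rewrite derive1E; have [_ ->] := dF t (ltW xt) (ltW ty).
  exact: dF_gt0 (ltW xt) (ltW ty).
- apply: derivable_within_continuous => t; rewrite in_itv /= => /andP[xt ty].
  by have [] := dF t xt ty.
Qed.
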